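(* Let $\Omega$ be a semigroup and let $(D, \{ \prec_\alpha, \succ_\alpha, \curlyvee_{\alpha, \beta} \}_{\alpha, \beta \in \Omega})$ be an NS-family algebra over a field $\mathbf{k}$. Define bilinear operations on $D \otimes \mathbf{k}\Omega$ by $$(x \otimes \alpha) \prec (y \otimes \beta) := (x \prec_\beta y ) \otimes \alpha \beta, \quad (x \otimes \alpha) \succ (y \otimes \beta) := (x \succ_\alpha y) \otimes \alpha \beta, \quad (x \otimes \alpha) \curlyvee (y \otimes \beta) := (x \curlyvee_{\alpha, \beta} y) \otimes \alpha \beta,$$ for $x,y\in D$, $\alpha,\beta\in\Omega$ (extended bilinearly). Then $(D \otimes \mathbf{k}\Omega, \prec, \succ, \curlyvee)$ is an NS-algebra. Further, if $f : D \to D'$ is a morphism of NS-family algebras from $(D, \{ \prec_\alpha, \succ_\alpha, \curlyvee_{\alpha, \beta} \})$ to $(D', \{ \prec'_\alpha, \succ'_\alpha, \curlyvee'_{\alpha, \beta} \})$, then the linear map $F : D \otimes \mathbf{k}\Omega \to D' \otimes \mathbf{k}\Omega$, $F(x \otimes \alpha) = f(x) \otimes \alpha$, is a morphism between the induced NS-algebras (i.e. it preserves $\prec,\succ,\curlyvee$).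
   Context: $\mathbf{k}$ is a field of characteristic $0$, $\Omega$ a semigroup and $\mathbf{k}\Omega$ its semigroup algebra (vector space with basis $\Omega$). An NS-algebra is a vector space $D$ with bilinear maps $\prec,\succ,\curlyvee: D\otimes D\to D$ such that for all $x,y,z$: $(x \prec y) \prec z = x \prec ( y \prec z + y \succ z + y \curlyvee z)$; $(x \succ y) \prec z = x \succ (y \prec z)$; $(x \prec y + x \succ y + x \curlyvee y) \succ z = x \succ (y \succ z)$; $( x \prec y + x \succ y + x \curlyvee y ) \curlyvee z + (x \curlyvee y) \prec z = x \succ (y \curlyvee z) + x \curlyvee ( y \prec z + y \succ z + y \curlyvee z )$. An NS-family algebra is a vector space $D$ with bilinear maps $\{ \prec_\alpha, \succ_\alpha, \curlyvee_{\alpha, \beta} : D \otimes D \to D \}_{\alpha, \beta \in \Omega}$ such that for all $x,y,z\in D$, $\alpha,\beta,\gamma\in\Omega$: (1) $(x \prec_\alpha y) \prec_\beta z = x \prec_{\alpha \beta} ( y \prec_\beta z + y \succ_\alpha z + y \curlyvee_{\alpha, \beta} z)$; (2) $(x \succ_\alpha y) \prec_\beta z = x \succ_\alpha (y \prec_\beta z)$; (3) $(x \prec_\beta y + x \succ_\alpha y + x \curlyvee_{\alpha, \beta} y) \succ_{\alpha \beta} z = x \succ_\alpha (y \succ_\beta z)$; (4) $( x \prec_\beta y + x \succ_\alpha y + x \curlyvee_{\alpha, \beta} y ) \curlyvee_{\alpha \beta, \gamma} z + (x \curlyvee_{\alpha, \beta} y) \prec_\gamma z = x \succ_\alpha (y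 \curlyvee_{\beta, \gamma} z) + x \curlyvee_{\alpha, \beta \gamma} ( y \prec_\gamma z + y \succ_\beta z + y \curlyvee_{\beta, \gamma} z )$. A morphism of NS-family algebras is a linear map $f$ with $f(x\prec_\alpha y)=f(x)\prec'_\alpha f(y)$, $f(x\succ_\alpha y)=f(x)\succ'_\alpha f(y)$, $f(x\curlyvee_{\alpha,\beta} y)=f(x)\curlyvee'_{\alpha,\beta} f(y)$ for all $x,y,\alpha,\beta$. *)

(* D (x) kOmega is modelled as the k-space of finitely
   supported functions Omega -> D, i.e. multinomials' {malg D[Omega]}. *)
From HB Require Import structures.
From mathcomp Require Import all_boot all_order all_algebra.
From mathcomp Require Import finmap.
From mathcomp.multinomials Require Export monalg.
Set Implicit Arguments. Unset Strict Implicit. Unset Printing Implicit Defensive.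
Import GRing.Theory.
Local Open Scope ring_scope.

Definition bilinear_op (k : fieldType) (V W : lmodType k) (op : V -> V -> W) : Prop :=
  (forall (c : k) x1 x2 y, op (c *: x1 + x2) y = c *: op x1 y + op x2 y) /\
  (forall (c : k) x y1 y2, op x (c *: y1 + y2) = c *: op x y1 + op x y2).

Definition NS_axioms (A : zmodType) (prec succ vee : A -> A -> A) : Prop :=
  forall x y z : A,
  [/\ prec (prec x y) z = prec x (prec y z + succ y z + vee y z),
      prec (succ x y) z = succ x (prec y z),
      succ (prec x y + succ x y + vee x y) z = succ x (succ y z) &
      vee (prec x y + succ x y + vee x y) z + prec (vee x y) z
        = succ x (vee y z) + vee x (prec y z + succ y z + vee y z)].

Definition NS_family_algebra (k : fieldType) (Omega : Type) (mul : Omega -> Omega -> Omega)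
  (D : lmodType k) (prec succ : Omega -> D -> D -> D)
  (vee : Omega -> Omega -> D -> D -> D) : Prop :=
  [/\ forall a, bilinear_op (prec a),
      forall a, bilinear_op (succ a),
      forall a b, bilinear_op (vee a b) &
  forall (x y z : D) (a b g : Omega),
  [/\ prec b (prec a x y) z = prec (mul a b) x (prec b y z + succ a y z + vee a b y z),
      prec b (succ a x y) z = succ a x (prec b y z),
      succ (mul a b) (prec b x y + succ a x y + vee a b x y) z = succ a x (succ b y z) &
      vee (mul a b) g (prec b x y + succ a x y + vee a b x y) z + prec g (vee a b x y) z
        = succ a x (vee b g y z) + vee a (mul b g) x (prec g y z + succ b y z + vee b g y z)]].

Definition NS_family_morphism (k : fieldType) (Omega : Type) (D D' : lmodType k)
  (prec succ : Omega -> D -> D -> D) (vee : Omega -> Omega -> D -> D -> D)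
  (prec' succ' : Omega -> D' -> D' -> D') (vee' : Omega -> Omega -> D' -> D' -> D')
  (f : D -> D') : Prop :=
  [/\ forall a x y, f (prec a x y) = prec' a (f x) (f y),
      forall a x y, f (succ a x y) = succ' a (f x) (f y) &
      forall a b x y, f (vee a b x y) = vee' a b (f x) (f y)].

(* D (x) kOmega := {malg D[Omega]}; the pure tensor x (x) a is << x *g a >>. *)
Section Tensor.
Variables (k : fieldType) (Omega : choiceType) (mul : Omega -> Omega -> Omega).
Variable (D : lmodType k).

Definition tscale (c : k) (u : {malg D[Omega]}) : {malg D[Omega]} :=
  \sum_(a <- msupp u) << c *: u@_a *g a >>.

Definition tensor_op (op : Omega -> Omega -> D -> D -> D)
  (u v : {malg D[Omega]}) : {malg D[Omega]} :=
  \sum_(a <- msupp u) \sum_(b <- msupp v) << op a b u@_a v@_b *g mul a b >>.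

Definition tprec (prec : Omega -> D -> D -> D) :=
  tensor_op (fun a b x y => prec b x y).
Definition tsucc (succ : Omega -> D -> D -> D) :=
  tensor_op (fun a b x y => succ a x y).
Definition tvee (vee : Omega -> Omega -> D -> D -> D) :=
  tensor_op (fun a b x y => vee a b x y).

Definition tbilinear (op : {malg D[Omega]} -> {malg D[Omega]} -> {malg D[Omega]}) : Prop :=
  (forall (c : k) u1 u2 v, op (tscale c u1 + u2) v = tscale c (op u1 v) + op u2 v) /\
  (forall (c : k) u v1 v2, op u (tscale c v1 + v2) = tscale c (op u v1) + op u v2).
End Tensor.

Definition tensor_map (Omega : choiceType) (D D' : zmodType) (f : D -> D')
  (u : {malg D[Omega]}) : {malg D'[Omega]} :=
  \sum_(a <- msupp u) << f u@_a *g a >>.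

From HB Require Import structures.
From mathcomp Require Import all_boot all_order all_algebra.
From mathcomp Require Import finmap.
From mathcomp.multinomials Require Import monalg.
Import GRing.Theory.
Local Open Scope ring_scope.

(* The induced operations are the bilinear extensions of their values on pure
   tensors, so both sides of each NS identity are additive in each of their
   three arguments and it suffices to compare them on pure tensors x (x) a,
   y (x) b, z (x) g.  There both sides are pure tensors over (ab)g = a(bg),
   whose D-components are the two sides of the corresponding NS-family
   identity.  Likewise f (x) id commutes with the induced operations because
   it does so on pure tensors. *)

Set Implicit Arguments.
Unset Strict Implicit.
Unset Printing Implicit Defensive.

Section MalgCoefficients.
Variables (Omega : choiceType) (G : zmodType).

Lemma mcoeff_sumU (d : {fset Omega}) (F : Omega -> G) a :
  (\sum_(b <- d) << F b *g b >>)@_a = if a \in d then F a else 0.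
Proof.
rewrite raddf_sum /=; case: ifP => [ad|/negbT a_notin_d].
  rewrite (big_fsetD1 a) //= mcoeffUU big1_fset ?addr0 // => b.
  by rewrite in_fsetD1 mcoeffU => /andP[/negbTE -> _].
rewrite big1_fset // => b bd _; rewrite mcoeffU.
by case: eqP => // ba; move: bd; rewrite ba (negbTE a_notin_d).
Qed.

Lemma msupp_le (w : {malg G[Omega]}) (d : {fset Omega}) :
  (forall a, a \notin d -> w@_a = 0) -> (msupp w `<=` d)%fset.
Proof.
move=> w_out; apply/fsubsetP => a; rewrite -mcoeff_neq0; apply: contraR.
by move/w_out ->; rewrite eqxx.
Qed.

Lemma malg_morph_eq (N : zmodType) (F F' : {malg G[Omega]} -> N) :
  {morph F : u v / u + v} -> {morph F' : u v / u + v} ->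
  (forall x a, F << x *g a >> = F' << x *g a >>) -> F =1 F'.
Proof.
have morph0 (H : {malg G[Omega]} -> N) : {morph H : u v / u + v} -> H 0 = 0.
  by move=> H_add; apply: (@addrI _ (H 0)); rewrite -H_add !addr0.
move=> FD F'D FU u; rewrite [u]monalgE.
rewrite (big_morph F FD (morph0 F FD)) (big_morph F' F'D (morph0 F' F'D)).
by apply: eq_bigr => a _.
Qed.

End MalgCoefficients.

Section Multiadditive.
Variables (Omega : choiceType) (G : zmodType).
Local Notation M := {malg G[Omega]}.

Definition biadditive (B : M -> M -> M) :=
  (forall v, {morph B^~ v : u1 u2 / u1 + u2}) /\
  (forall u, {morph B u : v1 v2 / v1 + v2}).

Definition triadditive (T : M -> M -> M -> M) :=
  [/\ forall v w, {morph (fun u => T u v w) : u1 u2 / u1 + u2},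
      forall u w, {morph T u ^~ w : v1 v2 / v1 + v2} &
      forall u v, {morph T u v : w1 w2 / w1 + w2}].

Lemma triadditive_eq (T T' : M -> M -> M -> M) :
  triadditive T -> triadditive T' ->
  (forall x a y b z c, T << x *g a >> << y *g b >> << z *g c >>
                     = T' << x *g a >> << y *g b >> << z *g c >>) ->
  forall u v w, T u v w = T' u v w.
Proof.
move=> [T1 T2 T3] [T'1 T'2 T'3] TU u v w.
apply: (malg_morph_eq (T1 v w) (T'1 v w)) => x a.
apply: (malg_morph_eq (T2 _ w) (T'2 _ w)) => y b.
exact: (malg_morph_eq (T3 _ _) (T'3 _ _)).
Qed.

Lemma biadditiveD B1 B2 : biadditive B1 -> biadditive B2 ->
  biadditive (fun u v => B1 u v + B2 u v).
Proof.
by move=> [B11 B12] [B21 B22]; split=> [v|u] x y /=; rewrite ?B11 ?B12 ?B21 ?B22 addrACA.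
Qed.

Lemma triadditiveD T1 T2 : triadditive T1 -> triadditive T2 ->
  triadditive (fun u v w => T1 u v w + T2 u v w).
Proof.
by move=> [T11 T12 T13] [T21 T22 T23]; split=> [v w|u w|u v] x y /=;
  rewrite ?T11 ?T12 ?T13 ?T21 ?T22 ?T23 addrACA.
Qed.

Lemma triadditive_compl B1 B2 : biadditive B1 -> biadditive B2 ->
  triadditive (fun u v w => B2 (B1 u v) w).
Proof.
by move=> [B11 B12] [B21 B22]; split=> [v w|u w|u v] x y /=;
  rewrite ?B11 ?B12 ?B21 ?B22.
Qed.

Lemma triadditive_compr B1 B2 : biadditive B1 -> biadditive B2 ->
  triadditive (fun u v w => B2 u (B1 v w)).
Proof.
by move=> [B11 B12] [B21 B22]; split=> [v w|u w|u v] x y /=;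
  rewrite ?B11 ?B12 ?B21 ?B22.
Qed.

End Multiadditive.

Section TensorMap.
Variables (Omega : choiceType) (G H : zmodType) (f : {additive G -> H}).

Lemma mcoeff_tensor_map (u : {malg G[Omega]}) a : (tensor_map f u)@_a = f u@_a.
Proof.
rewrite mcoeff_sumU; case: ifP => // /negbT /mcoeff_outdom ->.
by rewrite raddf0.
Qed.

Lemma msupp_tensor_map_le (u : {malg G[Omega]}) :
  (msupp (tensor_map f u) `<=` msupp u)%fset.
Proof.
by apply: msupp_le => a /mcoeff_outdom ua0; rewrite mcoeff_tensor_map ua0 raddf0.
Qed.

Lemma tensor_map0 : tensor_map f 0 = 0 :> {malg H[Omega]}.
Proof. by apply/malgP => a; rewrite mcoeff_tensor_map !mcoeff0 raddf0. Qed.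

Lemma tensor_mapD : {morph tensor_map (Omega:=Omega) f : u v / u + v}.
Proof.
by move=> u v; apply/malgP => a; rewrite !(mcoeffD, mcoeff_tensor_map) raddfD.
Qed.

Lemma tensor_mapU x a : tensor_map f << x *g a >> = << f x *g a >> :> {malg H[Omega]}.
Proof. by apply/malgP => b; rewrite mcoeff_tensor_map !mcoeffU raddfMn. Qed.

End TensorMap.

Lemma tensor_map_id (Omega : choiceType) (G : zmodType) (u : {malg G[Omega]}) :
  tensor_map idfun u = u.
Proof. by rewrite {2}[u]monalgE. Qed.

Lemma tscale_tensor_map (k : fieldType) (Omega : choiceType) (D : lmodType k)
    (c : k) (u : {malg D[Omega]}) :
  tscale c u = tensor_map ( *:%R c) u.
Proof. by []. Qed.

Lemma tensor_map_linear (k : fieldType) (Omega : choiceType) (D D' : lmodType k)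
    (f : {linear D -> D'}) (c : k) (u v : {malg D[Omega]}) :
  tensor_map f (tscale c u + v) = tscale c (tensor_map f u) + tensor_map f v.
Proof.
apply/malgP => a.
by rewrite !tscale_tensor_map !(mcoeffD, mcoeff_tensor_map) /= linearP.
Qed.

Section BilinearOp.
Variables (k : fieldType) (V W : lmodType k) (op : V -> V -> W).
Hypothesis op_bilinear : bilinear_op op.

Lemma bilinear_opDl x1 x2 y : op (x1 + x2) y = op x1 y + op x2 y.
Proof. by have := op_bilinear.1 1 x1 x2 y; rewrite !scale1r. Qed.

Lemma bilinear_opDr x y1 y2 : op x (y1 + y2) = op x y1 + op x y2.
Proof. by have := op_bilinear.2 1 x y1 y2; rewrite !scale1r. Qed.

Lemma bilinear_op0l y : op 0 y = 0.
Proof. by apply: (@addrI _ (op 0 y)); rewrite -bilinear_opDl !addr0. Qed.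

Lemma bilinear_op0r x : op x 0 = 0.
Proof. by apply: (@addrI _ (op x 0)); rewrite -bilinear_opDr !addr0. Qed.

Lemma bilinear_opZl c x y : op (c *: x) y = c *: op x y.
Proof. by have := op_bilinear.1 c x 0 y; rewrite !addr0 bilinear_op0l addr0. Qed.

Lemma bilinear_opZr c x y : op x (c *: y) = c *: op x y.
Proof. by have := op_bilinear.2 c x y 0; rewrite !addr0 bilinear_op0r addr0. Qed.

End BilinearOp.

Section TensorOp.
Variables (k : fieldType) (Omega : choiceType) (mul : Omega -> Omega -> Omega).
Variables (D : lmodType k) (op : Omega -> Omega -> D -> D -> D).
Hypothesis op_bilinear : forall a b, bilinear_op (op a b).

Lemma tensor_opEw (u v : {malg D[Omega]}) (d1 d2 : {fset Omega}) :
  (msupp u `<=` d1)%fset -> (msupp v `<=` d2)%fset ->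
  tensor_op mul op u v =
  \sum_(a <- d1) \sum_(b <- d2) << op a b u@_a v@_b *g mul a b >>.
Proof.
move=> le_ud1 le_vd2; rewrite /tensor_op (big_fset_incl _ le_ud1) /=.
  apply: eq_bigr => a _; apply: big_fset_incl => // b _ /mcoeff_outdom ->.
  by rewrite bilinear_op0r ?monalgU0.
move=> a _ /mcoeff_outdom ->.
by rewrite big1 // => b _; rewrite bilinear_op0l ?monalgU0.
Qed.

Lemma tensor_opDl v : {morph tensor_op mul op ^~ v : u1 u2 / u1 + u2}.
Proof.
move=> u1 u2; set d := (msupp u1 `|` msupp u2)%fset.
rewrite (@tensor_opEw _ _ d (msupp v)) ?msuppD_le //.
rewrite (@tensor_opEw u1 _ d (msupp v)) ?fsubsetUl //.
rewrite (@tensor_opEw u2 _ d (msupp v)) ?fsubsetUr //.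
rewrite -big_split; apply: eq_bigr => a _; rewrite -big_split.
by apply: eq_bigr => b _; rewrite mcoeffD bilinear_opDl ?monalgUD.
Qed.

Lemma tensor_opDr u : {morph tensor_op mul op u : v1 v2 / v1 + v2}.
Proof.
move=> v1 v2; set d := (msupp v1 `|` msupp v2)%fset.
rewrite (@tensor_opEw _ _ (msupp u) d) ?msuppD_le //.
rewrite (@tensor_opEw _ v1 (msupp u) d) ?fsubsetUl //.
rewrite (@tensor_opEw _ v2 (msupp u) d) ?fsubsetUr //.
rewrite -big_split; apply: eq_bigr => a _; rewrite -big_split.
by apply: eq_bigr => b _; rewrite mcoeffD bilinear_opDr ?monalgUD.
Qed.

Lemma tensor_op_biadditive : biadditive (tensor_op mul op).
Proof. by split; [apply: tensor_opDl | apply: tensor_opDr]. Qed.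

Lemma tensor_opU x a y b :
  tensor_op mul op << x *g a >> << y *g b >> = << op a b x y *g mul a b >>.
Proof.
rewrite (@tensor_opEw _ _ [fset a]%fset [fset b]%fset) ?msuppU_le //.
by rewrite !big_seq_fset1 !mcoeffUU.
Qed.

Lemma tensor_map_op (D0 : lmodType k) (op0 : Omega -> Omega -> D0 -> D0 -> D0)
    (f g h : {additive D0 -> D}) :
  (forall a b x y, h (op0 a b x y) = op a b (f x) (g y)) ->
  forall u v, tensor_map h (tensor_op mul op0 u v)
            = tensor_op mul op (tensor_map f u) (tensor_map g v).
Proof.
move=> hfg u v.
rewrite (@tensor_opEw _ _ (msupp u) (msupp v)) ?msupp_tensor_map_le //.
have tensor_map_sum := big_morph _ (tensor_mapD h) (tensor_map0 Omega h).
rewrite tensor_map_sum; apply: eq_bigr => a _.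
rewrite tensor_map_sum; apply: eq_bigr => b _.
by rewrite tensor_mapU hfg !mcoeff_tensor_map.
Qed.

Lemma tensor_opZl c (u v : {malg D[Omega]}) :
  tensor_op mul op (tscale c u) v = tscale c (tensor_op mul op u v).
Proof.
rewrite !tscale_tensor_map -[v in LHS]tensor_map_id; symmetry.
by apply: tensor_map_op => a b x y; rewrite /= bilinear_opZl.
Qed.

Lemma tensor_opZr c (u v : {malg D[Omega]}) :
  tensor_op mul op u (tscale c v) = tscale c (tensor_op mul op u v).
Proof.
rewrite !tscale_tensor_map -[u in LHS]tensor_map_id; symmetry.
by apply: tensor_map_op => a b x y; rewrite /= bilinear_opZr.
Qed.

Lemma tensor_op_tbilinear : tbilinear (tensor_op mul op).
Proof.
split=> c *; first by rewrite tensor_opDl ?tensor_opZl.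
by rewrite tensor_opDr ?tensor_opZr.
Qed.

End TensorOp.

Section InducedNSAlgebra.
Variables (k : fieldType) (Omega : choiceType) (mul : Omega -> Omega -> Omega).
Hypothesis mulA : associative mul.
Variables (D : lmodType k) (prec succ : Omega -> D -> D -> D).
Variable vee : Omega -> Omega -> D -> D -> D.
Hypothesis HD : NS_family_algebra mul prec succ vee.

Local Notation P := (tprec mul prec).
Local Notation S := (tsucc mul succ).
Local Notation V := (tvee mul vee).

Lemma tensor_NS_axioms : NS_axioms P S V.
Proof.
have [prec_bil succ_bil vee_bil NS_family] := HD.
have P_biadd : biadditive P by apply: tensor_op_biadditive => a b; apply: prec_bil.
have S_biadd : biadditive S by apply: tensor_op_biadditive => a b; apply: succ_bil.
have V_biadd : biadditive V by apply: tensor_op_biadditive => a b; apply: vee_bil.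
have PSV_biadd := biadditiveD (biadditiveD P_biadd S_biadd) V_biadd.
have PU x a y b : P << x *g a >> << y *g b >> = << prec b x y *g mul a b >>.
  by apply: tensor_opU => a' b'; apply: prec_bil.
have SU x a y b : S << x *g a >> << y *g b >> = << succ a x y *g mul a b >>.
  by apply: tensor_opU => a' b'; apply: succ_bil.
have VU x a y b : V << x *g a >> << y *g b >> = << vee a b x y *g mul a b >>.
  by apply: tensor_opU => a' b'; apply: vee_bil.
move=> u v w; split; move: u v w.
- apply: (triadditive_eq (triadditive_compl P_biadd P_biadd)
                         (triadditive_compr PSV_biadd P_biadd)) => x a y b z g /=.
  rewrite !PU SU VU -!monalgUD PU mulA.
  by have [-> _ _ _] := NS_family x y z b g g.
- apply: (triadditive_eq (triadditive_compl S_biadd P_biadd)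
                         (triadditive_compr P_biadd S_biadd)) => x a y b z g /=.
  rewrite !PU !SU PU mulA.
  by have [_ -> _ _] := NS_family x y z a g g.
- apply: (triadditive_eq (triadditive_compl PSV_biadd S_biadd)
                         (triadditive_compr S_biadd S_biadd)) => x a y b z g /=.
  rewrite PU !SU VU -!monalgUD SU mulA.
  by have [_ _ -> _] := NS_family x y z a b g.
- apply: (triadditive_eq
    (triadditiveD (triadditive_compl PSV_biadd V_biadd)
                  (triadditive_compl V_biadd P_biadd))
    (triadditiveD (triadditive_compr V_biadd S_biadd)
                  (triadditive_compr PSV_biadd V_biadd)))
    => x a y b z g /=.
  rewrite !PU !SU !VU -!monalgUD !PU !SU !VU mulA -!monalgUD.
  by have [_ _ _ ->] := NS_family x y z a b g.
Qed.

End InducedNSAlgebra.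

Theorem theorem3p13 (k : fieldType) (k_char0 : [pchar k] =i pred0)
  (Omega : choiceType) (mul : Omega -> Omega -> Omega) (mulA : associative mul)
  (D : lmodType k) (prec succ : Omega -> D -> D -> D)
  (vee : Omega -> Omega -> D -> D -> D)
  (HD : NS_family_algebra mul prec succ vee) :
  (* D (x) kOmega with the induced operations is an NS-algebra *)
  [/\ tbilinear (tprec mul prec), tbilinear (tsucc mul succ),
      tbilinear (tvee mul vee) &
      NS_axioms (tprec mul prec) (tsucc mul succ) (tvee mul vee)] /\
  (* functoriality *)
  (forall (D' : lmodType k) (prec' succ' : Omega -> D' -> D' -> D')
     (vee' : Omega -> Omega -> D' -> D' -> D') (f : {linear D -> D'}),
     NS_family_algebra mul prec' succ' vee' ->
     NS_family_morphism prec succ vee prec' succ' vee' f ->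
     [/\ forall (c : k) u v,
           tensor_map (Omega:=Omega) f (tscale c u + v)
           = tscale c (tensor_map f u) + tensor_map f v,
         forall u v : {malg D[Omega]},
           tensor_map f (tprec mul prec u v)
           = tprec mul prec' (tensor_map f u) (tensor_map f v),
         forall u v : {malg D[Omega]},
           tensor_map f (tsucc mul succ u v)
           = tsucc mul succ' (tensor_map f u) (tensor_map f v) &
         forall u v : {malg D[Omega]},
           tensor_map f (tvee mul vee u v)
           = tvee mul vee' (tensor_map f u) (tensor_map f v)]).
Proof.
have [prec_bil succ_bil vee_bil _] := HD.
split.
  split; last exact: tensor_NS_axioms.
  - by apply: tensor_op_tbilinear => a b; apply: prec_bil.
  - by apply: tensor_op_tbilinear => a b; apply: succ_bil.
  - by apply: tensor_op_tbilinear => a b; apply: vee_bil.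
move=> D' prec' succ' vee' f [prec'_bil succ'_bil vee'_bil _] [f_prec f_succ f_vee].
split; first exact: tensor_map_linear.
- by apply: tensor_map_op => [a b|a b x y]; [apply: prec'_bil | apply: f_prec].
- by apply: tensor_map_op => [a b|a b x y]; [apply: succ'_bil | apply: f_succ].
- by apply: tensor_map_op => [a b|a b x y]; [apply: vee'_bil | apply: f_vee].
Qed.
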